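(* Let $n\ge 1$. There is exactly one rooted binary tree (up to isomorphism) with $n$ leaves of minimal Sackin index if and only if there exists an integer $m\ge 0$ with $n\in\{2^m-1,\,2^m,\,2^m+1\}$.
   Context: A rooted binary tree is either a single vertex (both root and leaf), or a finite tree with a distinguished root of degree 2 whose other non-leaf vertices have degree 3; trees are considered up to isomorphism of rooted trees (leaves unlabeled). The Sackin index is $\mathcal S(T)=\sum_{x\text{ leaf}}\delta_x$, with $\delta_x$ the number of edges from the root to $x$. *)

From mathcomp Require Import all_boot.
Set Implicit Arguments. Unset Strict Implicit. Unset Printing Implicit Defensive.

(* Rooted binary trees: a single vertex (Leaf) or a root with two
   (unordered, up to isomorphism) subtrees. *)
Inductive btree : Type :=
| Leaf : btree
| Node : btree -> btree -> btree.

Fixpoint nleaves (t : btree) : nat :=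
  match t with
  | Leaf => 1
  | Node l r => nleaves l + nleaves r
  end.

Fixpoint leaf_depths (t : btree) : seq nat :=
  match t with
  | Leaf => [:: 0]
  | Node l r => map S (leaf_depths l ++ leaf_depths r)
  end.

Definition sackin (t : btree) : nat := sumn (leaf_depths t).

Fixpoint tree_iso (t u : btree) : bool :=
  match t, u with
  | Leaf, Leaf => true
  | Node a b, Node c d =>
      (tree_iso a c && tree_iso b d) || (tree_iso a d && tree_iso b c)
  | _, _ => false
  end.

Definition sackin_minimal (n : nat) (t : btree) : Prop :=
  nleaves t = n /\ forall u, nleaves u = n -> sackin t <= sackin u.

Definition unique_sackin_min (n : nat) : Prop :=
  (exists t, sackin_minimal n t) /\
  (forall t u, sackin_minimal n t -> sackin_minimal n u -> tree_iso t u).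

From mathcomp Require Import all_boot.
From mathcomp Require Import zify.

Set Implicit Arguments.
Unset Strict Implicit.
Unset Printing Implicit Defensive.

(* For 2^k <= n <= 2^(k+1), splitting the leaves of a tree at each level
   gives sackin t >= (k + 2) n - 2^(k+1), with equality exactly for the trees
   all of whose leaves lie at depth k or k + 1 ("tight" trees), and tight
   trees exist for every such n.  A tight tree at level k + 1 is a root over
   two tight trees at level k.  When n is 2^k, 2^k + 1, 2^(k+1) - 1 or
   2^(k+1), the sizes of the two subtrees are forced and lie in the same
   family one level down, so the minimiser is unique; for every other n the
   two splits (n/2, n - n/2) and (n/2 - 1, n - n/2 + 1) are both admissible
   and give non-isomorphic minimisers. *)

Lemma sumn_mapS (s : seq nat) : sumn (map S s) = sumn s + size s.
Proof. by elim: s => [|x s IHs] //=; rewrite IHs; lia. Qed.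

Lemma size_leaf_depths t : size (leaf_depths t) = nleaves t.
Proof. by elim: t => [|l IHl r IHr] //=; rewrite size_map size_cat IHl IHr. Qed.

Lemma sackin_Node l r :
  sackin (Node l r) = sackin l + sackin r + nleaves l + nleaves r.
Proof.
by rewrite /sackin /= sumn_mapS sumn_cat size_cat !size_leaf_depths; lia.
Qed.

Lemma nleaves_gt0 t : 0 < nleaves t.
Proof. by elim: t => [|l IHl r IHr] //=; lia. Qed.

Lemma nleaves_eq1 t : nleaves t = 1 -> t = Leaf.
Proof. by case: t => //= l r; have := nleaves_gt0 l; have := nleaves_gt0 r; lia. Qed.

Lemma nleaves_eq2 t : nleaves t = 2 -> t = Node Leaf Leaf.
Proof.
case: t => //= l r hlr; have := nleaves_gt0 l; have := nleaves_gt0 r => hr hl.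
by rewrite (@nleaves_eq1 l) 1?(@nleaves_eq1 r) //; lia.
Qed.

Lemma tree_iso_nleaves t u : tree_iso t u -> nleaves t = nleaves u.
Proof.
elim: t u => [|a IHa b IHb] [|c d] //= /orP[] /andP[/IHa-> /IHb->] //.
exact: addnC.
Qed.

Lemma sackin_lower_bound k t : (k + 2) * nleaves t <= sackin t + 2 * 2 ^ k.
Proof.
elim: t k => [|l IHl r IHr] [|k] /=; rewrite ?sackin_Node ?expnS ?expn0 //.
- by have := ltn_expl k (isT : 1 < 2); lia.
- by have := IHl 0; have := IHr 0; have := nleaves_gt0 l; rewrite expn0; lia.
- by have := IHl k; have := IHr k; lia.
Qed.

Definition tight k t := sackin t + 2 * 2 ^ k = (k + 2) * nleaves t.

Lemma tight_Node k l r : tight k l -> tight k r -> tight k.+1 (Node l r).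
Proof. by rewrite /tight sackin_Node /= expnS; lia. Qed.

Lemma tight_children k l r : tight k.+1 (Node l r) -> tight k l /\ tight k r.
Proof.
rewrite /tight sackin_Node /= expnS => h.
by have := sackin_lower_bound k l; have := sackin_lower_bound k r; lia.
Qed.

Lemma tight_nleaves_bounds k t : tight k t -> 2 ^ k <= nleaves t <= 2 * 2 ^ k.
Proof.
rewrite /tight => h; have := sackin_lower_bound k.+1 t; rewrite expnS.
case: k h => [|k] h; first by have := nleaves_gt0 t; lia.
by have := sackin_lower_bound k t; rewrite expnS in h *; lia.
Qed.

Lemma exists_tight k n :
  2 ^ k <= n <= 2 * 2 ^ k -> exists2 t, nleaves t = n & tight k t.
Proof.
elim: k n => [|k IHk] n; rewrite ?expn0 ?expnS => hn.
  have [->|->] : n = 1 \/ n = 2 by lia.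
    by exists Leaf.
  by exists (Node Leaf Leaf).
have hk : 0 < 2 ^ k by rewrite expn_gt0.
have [l hl tl] := IHk (n %/ 2) ltac:(lia).
have [r hr tr] := IHk (n - n %/ 2) ltac:(lia).
by exists (Node l r); [rewrite /= hl hr; lia | exact: tight_Node].
Qed.

Lemma tight_sackin_minimal k n t : tight k t -> nleaves t = n -> sackin_minimal n t.
Proof.
rewrite /tight => ht hn; split=> // u hu.
by have := sackin_lower_bound k u; rewrite hu -hn; lia.
Qed.

Lemma sackin_minimal_tight k n t :
  2 ^ k <= n <= 2 * 2 ^ k -> sackin_minimal n t -> tight k t.
Proof.
move=> /exists_tight[u hu tu] [ht tmin].
have := tmin u hu; have := sackin_lower_bound k t; move: tu.
by rewrite /tight ht hu; lia.
Qed.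

Definition near_pow2 k n :=
  n = 2 ^ k \/ n = 2 ^ k + 1 \/ n = 2 * 2 ^ k - 1 \/ n = 2 * 2 ^ k.

Lemma tight_iso k t u :
  tight k t -> tight k u -> nleaves t = nleaves u -> near_pow2 k (nleaves t) ->
  tree_iso t u.
Proof.
elim: k t u => [|k IHk] t u tt tu etu.
  have := tight_nleaves_bounds tt; rewrite expn0 /near_pow2 => ht _.
  have [e|e] : nleaves t = 1 \/ nleaves t = 2 by lia.
    by rewrite (nleaves_eq1 e) (@nleaves_eq1 u) // -etu.
  by rewrite (nleaves_eq2 e) (@nleaves_eq2 u) // -etu.
have hk : 0 < 2 ^ k by rewrite expn_gt0.
have := tight_nleaves_bounds tt; have := tight_nleaves_bounds tu.
rewrite expnS; case: t u tt tu etu => [|l r] [|c d] //= tt tu etu bu bt; try lia.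
have [tl tr] := tight_children tt; have [tc td] := tight_children tu.
have := tight_nleaves_bounds tl; have := tight_nleaves_bounds tr.
have := tight_nleaves_bounds tc; have := tight_nleaves_bounds td.
rewrite /near_pow2 expnS => bd bc br bl near.
have [[elc erd]|[eld erc]] :
  nleaves l = nleaves c /\ nleaves r = nleaves d \/
  nleaves l = nleaves d /\ nleaves r = nleaves c by lia.
  by apply/orP; left; apply/andP; split; apply: IHk => //; rewrite /near_pow2; lia.
by apply/orP; right; apply/andP; split; apply: IHk => //; rewrite /near_pow2; lia.
Qed.

Lemma unique_sackin_min_near_pow2 k n : near_pow2 k n -> unique_sackin_min n.
Proof.
move=> near; have hk : 2 ^ k <= n <= 2 * 2 ^ k.
  by have := expn_gt0 2 k; rewrite /near_pow2 in near; lia.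
split.
  by have [t ht tt] := exists_tight hk; exists t; exact: tight_sackin_minimal tt ht.
move=> t u mt mu; apply: tight_iso (sackin_minimal_tight hk mt) _ _ _.
- exact: sackin_minimal_tight hk mu.
- by rewrite mt.1 mu.1.
- by rewrite mt.1.
Qed.

Lemma not_unique_sackin_min k n :
  2 ^ k + 2 <= n <= 2 * 2 ^ k - 2 -> ~ unique_sackin_min n.
Proof.
case: k => [|k]; rewrite ?expn0 ?expnS; first by lia.
move=> hn [_ uniq]; set a := n %/ 2.
have ha : 2 * a <= n <= 2 * a + 1 by rewrite /a; lia.
clearbody a.
have [tl hl tl_t] := @exists_tight k a ltac:(lia).
have [tr hr tr_t] := @exists_tight k (n - a) ltac:(lia).
have [tl' hl' tl'_t] := @exists_tight k (a - 1) ltac:(lia).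
have [tr' hr' tr'_t] := @exists_tight k (n - a + 1) ltac:(lia).
have mt : sackin_minimal n (Node tl tr).
  by apply: tight_sackin_minimal (tight_Node tl_t tr_t) _; rewrite /= hl hr; lia.
have mt' : sackin_minimal n (Node tl' tr').
  by apply: tight_sackin_minimal (tight_Node tl'_t tr'_t) _; rewrite /= hl' hr'; lia.
by move: (uniq _ _ mt mt') => /= /orP[] /andP[/tree_iso_nleaves + _];
  rewrite ?hl ?hl' ?hr'; lia.
Qed.

Lemma near_pow2_or_middle n :
  0 < n -> (exists k, near_pow2 k n) \/ exists k, 2 ^ k + 2 <= n <= 2 * 2 ^ k - 2.
Proof.
move=> n_gt0; set k := trunc_log 2 n.
have lo : 2 ^ k <= n by exact: trunc_logP.
have /= := trunc_log_ltn n (isT : 1 < 2); rewrite -/k expnS => hi.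
have [near | middle] : near_pow2 k n \/ 2 ^ k + 2 <= n <= 2 * 2 ^ k - 2.
  by rewrite /near_pow2; lia.
- by left; exists k.
- by right; exists k.
Qed.

Lemma near_pow2_iff n :
  0 < n ->
  (exists k, near_pow2 k n) <->
  exists m, n = 2 ^ m - 1 \/ n = 2 ^ m \/ n = 2 ^ m + 1.
Proof.
rewrite /near_pow2 => n_gt0; split=> -[k near].
  by case: near => [|[|[|]]] ->; [exists k | exists k | exists k.+1 | exists k.+1];
    rewrite ?expnS; lia.
case: near => [e | [e | e]]; try by exists k; lia.
case: k e => [|k]; rewrite ?expn0 ?expnS => e; first by lia.
by exists k; lia.
Qed.

Theorem mainTheorem14 (n : nat) (hn : 1 <= n) :
  unique_sackin_min n <->
  exists m : nat, n = 2 ^ m - 1 \/ n = 2 ^ m \/ n = 2 ^ m + 1.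
Proof.
rewrite -(near_pow2_iff hn); split=> [uniq | [k near]].
  have [// | [k middle]] := near_pow2_or_middle hn.
  by have := not_unique_sackin_min middle.
exact: unique_sackin_min_near_pow2 near.
Qed.
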